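(* Let $x_1,\dots,x_u$ be complex indeterminates and let $X$ be a full QOD$(n;s_1,\dots,s_u)$, written as $X=\begin{bmatrix}X_1\\ X_2\end{bmatrix}$, where $X_1$ is the $m\times n$ submatrix consisting of $m$ of the rows of $X$. Suppose there are $\alpha,\beta\in\mathbb{H}$ with $|\alpha|=|\beta|$ such that one of the following holds: (a) every off-diagonal entry of $X_1^*X_1$ is of the form $\pm\varepsilon c\, x_1^{\ell_1}\cdots x_u^{\ell_u}(x_1^* )^{\ell'_1}\cdots(x_u^* )^{\ell'_u}$ with $\ell_i,\ell'_i\in\mathbb{Z}_{\ge0}$, $\varepsilon\in\{1,i,j,k\}$, $c\in\{\alpha,\alpha^*,\beta,\beta^*\}$; or (b) every off-diagonal entry of $X_1^*X_1$ is of the form $\pm\varepsilon c\,\sigma$ with $\varepsilon\in\{1,i,j,k\}$, $c\in\{\alpha,\alpha^*,\beta,\beta^*\}$, where $\sigma=\sum_{\ell=1}^u s_\ell|x_\ell|^2$. Then, for every assignment of complex numbers to $x_1,\dots,x_u$ with $|x_1|=\cdots=|x_u|=1$, the $n$ column vectors of $X_1$ form an equiangular tight frame for $\mathbb{H}^m$ with frame constant $n$.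
   Context: $\mathbb{H}$ denotes the real quaternions with $i^2=j^2=k^2=ijk=-1$; for a matrix $M$ over $\mathbb{H}$, $M^*$ is its conjugate transpose. A (restricted) quaternionic orthogonal design QOD$(n;s_1,\dots,s_u)$ in complex indeterminates $x_1,\dots,x_u$ is an $n\times n$ matrix $X$ with entries from $\{0,\pm\varepsilon x_\ell,\pm\varepsilon x_\ell^*: 1\le \ell\le u,\ \varepsilon\in\{1,i,j,k\}\}$ such that $XX^*=\sigma I_n$ with $\sigma=\sum_{\ell=1}^u s_\ell|x_\ell|^2$; it is full if $\sum_\ell s_\ell=n$. A sequence $v_1,\dots,v_n\in\mathbb{H}^m$ is a frame if there are constants $A,B>0$ with $A\|v\|^2\le\sum_{\ell=1}^n|\langle v,v_\ell\rangle|^2\le B\|v\|^2$ for all $v\in\mathbb{H}^m$; it is tight (with frame constant $A$) if one can take $A=B$; a tight frame is equiangular if, with $V=[v_1\ \cdots\ v_n]$, all off-diagonal entries of $V^*V$ have the same absolute value. *)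

(* Real quaternions over an arbitrary real closed field R
   (R = the reals is the case of the paper), complex numbers = R[i]
   from mathcomp-real-closed. *)
From HB Require Import structures.
From mathcomp Require Import all_boot all_order all_algebra.
From mathcomp Require Import complex.
From mathcomp Require Import ring.

Set Implicit Arguments.
Unset Strict Implicit.
Unset Printing Implicit Defensive.

Import Order.TTheory GRing.Theory Num.Theory.
Local Open Scope ring_scope.

(* Quaternions  q = q0 + q1 i + q2 j + q3 k                             *)
Record quat (R : Type) : Type := Quat { q0 : R; q1 : R; q2 : R; q3 : R }.

Section QuatRing.
Variable R : rcfType.

Definition quat2tuple (q : quat R) := (q0 q, q1 q, q2 q, q3 q).
Definition tuple2quat (t : R * R * R * R) :=
  let: (a, b, c, d) := t in Quat a b c d.
Lemma quat2tupleK : cancel quat2tuple tuple2quat. Proof. by case. Qed.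

HB.instance Definition _ := Choice.copy (quat R) (can_type quat2tupleK).

Definition qzero : quat R := Quat 0 0 0 0.
Definition qone : quat R := Quat 1 0 0 0.
Definition qopp (p : quat R) := Quat (- q0 p) (- q1 p) (- q2 p) (- q3 p).
Definition qadd (p q : quat R) :=
  Quat (q0 p + q0 q) (q1 p + q1 q) (q2 p + q2 q) (q3 p + q3 q).
(* Hamilton product, with i^2 = j^2 = k^2 = ijk = -1 *)
Definition qmul (p q : quat R) :=
  Quat (q0 p * q0 q - q1 p * q1 q - q2 p * q2 q - q3 p * q3 q)
       (q0 p * q1 q + q1 p * q0 q + q2 p * q3 q - q3 p * q2 q)
       (q0 p * q2 q - q1 p * q3 q + q2 p * q0 q + q3 p * q1 q)
       (q0 p * q3 q + q1 p * q2 q - q2 p * q1 q + q3 p * q0 q).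

Lemma quat_eq (p q : quat R) :
  q0 p = q0 q -> q1 p = q1 q -> q2 p = q2 q -> q3 p = q3 q -> p = q.
Proof. by case: p; case: q => /= ? ? ? ? ? ? ? ? -> -> -> ->. Qed.

Lemma qaddA : associative qadd.
Proof. by move=> ? ? ?; apply: quat_eq; rewrite /= addrA. Qed.
Lemma qaddC : commutative qadd.
Proof. by move=> ? ?; apply: quat_eq; rewrite /= addrC. Qed.
Lemma qadd0 : left_id qzero qadd.
Proof. by move=> ?; apply: quat_eq; rewrite /= add0r. Qed.
Lemma qaddN : left_inverse qzero qopp qadd.
Proof. by move=> ?; apply: quat_eq; rewrite /= addNr. Qed.
Lemma qmulA : associative qmul.
Proof. by move=> ? ? ?; apply: quat_eq => /=; ring. Qed.
Lemma qmul1 : left_id qone qmul.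
Proof. by move=> ?; apply: quat_eq => /=; ring. Qed.
Lemma qmul1r : right_id qone qmul.
Proof. by move=> ?; apply: quat_eq => /=; ring. Qed.
Lemma qmulDl : left_distributive qmul qadd.
Proof. by move=> ? ? ?; apply: quat_eq => /=; ring. Qed.
Lemma qmulDr : right_distributive qmul qadd.
Proof. by move=> ? ? ?; apply: quat_eq => /=; ring. Qed.
Lemma qone_neq0 : qone != qzero.
Proof. by apply/eqP => -[] /eqP; rewrite oner_eq0. Qed.

HB.instance Definition _ := GRing.isNzRing.Build (quat R)
  qaddA qaddC qadd0 qaddN qmulA qmul1 qmul1r qmulDl qmulDr qone_neq0.

End QuatRing.

Section QuatDefs.
Variable R : rcfType.

Definition qconj (q : quat R) : quat R := Quat (q0 q) (- q1 q) (- q2 q) (- q3 q).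
Definition qnorm2 (q : quat R) : R := q0 q ^+ 2 + q1 q ^+ 2 + q2 q ^+ 2 + q3 q ^+ 2.
Definition qnorm (q : quat R) : R := Num.sqrt (qnorm2 q).
Definition qreal (r : R) : quat R := Quat r 0 0 0.
Definition qcplx (z : R[i]) : quat R := Quat (complex.Re z) (complex.Im z) 0 0.

Inductive qunit := U1 | Ui | Uj | Uk.
Definition qunit_val (e : qunit) : quat R :=
  match e with
  | U1 => Quat 1 0 0 0 | Ui => Quat 0 1 0 0
  | Uj => Quat 0 0 1 0 | Uk => Quat 0 0 0 1 end.

Definition qadj m n (M : 'M[quat R]_(m, n)) : 'M[quat R]_(n, m) :=
  \matrix_(i, j) qconj (M j i).

(* Formal entries of a quaternionic orthogonal design in the complex   *)
(* indeterminates x_1..x_u :  0, (-1)^s * eps * x_l, (-1)^s * eps * x_l^* *)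
Inductive qod_entry (u : nat) :=
  | QZero
  | QVar of bool (* sign: true = minus *) & qunit & 'I_u & bool (* conjugated *).

Definition eval_entry u (x : 'I_u -> R[i]) (e : qod_entry u) : quat R :=
  match e with
  | QZero => 0
  | QVar s eps l c =>
      (-1) ^+ s * qunit_val eps * qcplx (if c then conjc (x l) else x l)
  end.

Definition eval_design u m n (x : 'I_u -> R[i]) (X : 'M[qod_entry u]_(m, n))
  : 'M[quat R]_(m, n) := \matrix_(i, j) eval_entry x (X i j).

Definition cnorm2 (z : R[i]) : R := complex.Re z ^+ 2 + complex.Im z ^+ 2.

Definition qod_sigma u (s : 'I_u -> nat) (x : 'I_u -> R[i]) : R :=
  \sum_(l < u) (s l)%:R * cnorm2 (x l).

(* X is a QOD(n; s_1,...,s_u): X X^* = sigma I_n as an identity in the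
   complex indeterminates, i.e. for every complex value of x_1..x_u. *)
Definition is_QOD u n (s : 'I_u -> nat) (X : 'M[qod_entry u]_n) : Prop :=
  forall x : 'I_u -> R[i],
    eval_design x X *m qadj (eval_design x X) = (qreal (qod_sigma s x))%:M.

Definition is_full_QOD u n (s : 'I_u -> nat) (X : 'M[qod_entry u]_n) : Prop :=
  is_QOD s X /\ (\sum_(l < u) s l)%N = n.

Definition cmonomial u (x : 'I_u -> R[i]) (a b : 'I_u -> nat) : R[i] :=
  (\prod_(l < u) x l ^+ a l) * (\prod_(l < u) conjc (x l) ^+ b l).

Definition qinner m (v w : 'cV[quat R]_m) : quat R :=
  \sum_(i < m) qconj (w i 0) * v i 0.
Definition qvnorm m (v : 'cV[quat R]_m) : R :=
  Num.sqrt (\sum_(i < m) qnorm2 (v i 0)).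

Definition frame_bounds m n (V : 'M[quat R]_(m, n)) (A B : R) : Prop :=
  0 < A /\ 0 < B /\
  forall v : 'cV[quat R]_m,
    A * qvnorm v ^+ 2 <= \sum_(l < n) qnorm (qinner v (col l V)) ^+ 2 /\
    \sum_(l < n) qnorm (qinner v (col l V)) ^+ 2 <= B * qvnorm v ^+ 2.

Definition is_frame m n (V : 'M[quat R]_(m, n)) : Prop :=
  exists A B, frame_bounds V A B.

Definition tight_frame m n (V : 'M[quat R]_(m, n)) (A : R) : Prop :=
  frame_bounds V A A.

Definition equiangular_tight_frame m n (V : 'M[quat R]_(m, n)) (A : R) : Prop :=
  tight_frame V A /\
  exists c : R, forall i j : 'I_n, i != j -> qnorm ((qadj V *m V) i j) = c.

End QuatDefs.

Arguments QZero {u}.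

From HB Require Import structures.
From mathcomp Require Import all_boot all_order all_algebra.
From mathcomp Require Import complex.
From mathcomp Require Import ring.

Set Implicit Arguments.
Unset Strict Implicit.
Unset Printing Implicit Defensive.
Import Order.TTheory GRing.Theory Num.Theory.
Local Open Scope ring_scope.

(* Specialise the indeterminates to unimodular complex numbers.
   Then sigma = s_1 + ... + s_u = n, because the design is full.
   - Tightness: the rows of X are pairwise orthogonal with squared norm
     sigma, hence so are the rows of any row-submatrix X1, i.e.
     X1 X1^* = n I_m.  For any matrix V with V V^* = r I, expanding the
     frame energy  sum_l |<v, v_l>|^2  through the Gram-like identity
     sum_l <v,v_l>^* <v,v_l> = sum_(i,j) v_i^* G_ij v_j,  G = V V^*,  gives
     r ||v||^2, so the columns of X1 form a tight frame with constant n.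
   - Equiangularity: the quaternion norm is multiplicative, signs, the
     units 1, i, j, k and unimodular complex monomials have norm 1, and
     alpha, alpha^*, beta, beta^* all have norm |alpha|.  So every
     off-diagonal entry of X1^* X1 has norm |alpha| in case (a) and
     n |alpha| in case (b). *)

Section QuaternionAlgebra.
Variable R : rcfType.
Implicit Types p q : quat R.

Lemma qmulE p q : p * q = qmul p q. Proof. by []. Qed.
Lemma qaddE p q : p + q = qadd p q. Proof. by []. Qed.

Lemma q0_sum I (r : seq I) (P : pred I) (F : I -> quat R) :
  q0 (\sum_(i <- r | P i) F i) = \sum_(i <- r | P i) q0 (F i).
Proof. exact: (big_morph _ (fun p q => erefl (q0 (p + q)))). Qed.

Lemma qconjD p q : qconj (p + q) = qconj p + qconj q.
Proof. by rewrite !qaddE; apply: quat_eq => /=; ring. Qed.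

Lemma qconj0 : qconj (0 : quat R) = 0.
Proof. by apply: quat_eq; rewrite /= ?oppr0. Qed.

Lemma qconj_sum I (r : seq I) (P : pred I) (F : I -> quat R) :
  qconj (\sum_(i <- r | P i) F i) = \sum_(i <- r | P i) qconj (F i).
Proof. exact: (big_morph _ qconjD qconj0). Qed.

Lemma qconjM p q : qconj (p * q) = qconj q * qconj p.
Proof. by rewrite !qmulE; apply: quat_eq => /=; ring. Qed.

Lemma qconjK p : qconj (qconj p) = p.
Proof. by apply: quat_eq; rewrite /= ?opprK. Qed.

Lemma qnorm2_ge0 p : 0 <= qnorm2 p.
Proof. by rewrite /qnorm2 !addr_ge0 ?sqr_ge0. Qed.

Lemma qnorm_sq p : qnorm p ^+ 2 = qnorm2 p.
Proof. by rewrite /qnorm sqr_sqrtr ?qnorm2_ge0. Qed.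

Lemma qnorm2_q0 p : qnorm2 p = q0 (qconj p * p).
Proof. by rewrite qmulE /qnorm2 /=; ring. Qed.

Lemma q0_conj_real_mul (a : quat R) (r : R) :
  q0 (qconj a * qreal r * a) = r * qnorm2 a.
Proof. by rewrite !qmulE /qnorm2 /=; ring. Qed.

(* The quaternion norm is multiplicative (Euler's four-square identity). *)
Lemma qnormM p q : qnorm (p * q) = qnorm p * qnorm q.
Proof.
have qnorm2M : qnorm2 (p * q) = qnorm2 p * qnorm2 q.
  by rewrite qmulE /qnorm2 /=; ring.
by rewrite /qnorm qnorm2M sqrtrM ?qnorm2_ge0.
Qed.

Lemma qnorm_conj p : qnorm (qconj p) = qnorm p.
Proof. by rewrite /qnorm /qnorm2 /= !sqrrN. Qed.

Lemma qnorm_sign (b : bool) : qnorm ((-1) ^+ b : quat R) = 1.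
Proof.
by case: b; rewrite /qnorm /qnorm2 /= ?oppr0 ?sqrrN expr1n expr0n /= !addr0 sqrtr1.
Qed.

Lemma qnorm_unit e : qnorm (qunit_val R e) = 1.
Proof.
by case: e; rewrite /qnorm /qnorm2 /= expr1n expr0n /= ?addr0 ?add0r sqrtr1.
Qed.

Lemma qnorm_real (r : R) : 0 <= r -> qnorm (qreal r) = r.
Proof.
by move=> r0; rewrite /qnorm /qnorm2 /= expr0n /= !addr0 sqrtr_sqr ger0_norm.
Qed.

Lemma cnorm2_unimodular (z : R[i]) : `|z| = 1 -> cnorm2 z = 1.
Proof.
move=> hz; have := add_Re2_Im2 z; rewrite hz expr1n.
by move/(congr1 (@complex.Re R)).
Qed.

Lemma qnorm_cplx_unimodular (z : R[i]) : `|z| = 1 -> qnorm (qcplx z) = 1.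
Proof.
move=> /cnorm2_unimodular; rewrite /qnorm /qnorm2 /cnorm2 /= expr0n /= !addr0.
by move=> ->; rewrite sqrtr1.
Qed.

Lemma qnorm_signed_unit_mul (sg : bool) (eps : qunit) (c w : quat R) :
  qnorm ((-1) ^+ sg * qunit_val R eps * c * w) = qnorm c * qnorm w.
Proof. by rewrite !qnormM qnorm_sign qnorm_unit !mul1r. Qed.

End QuaternionAlgebra.

Section FrameEnergy.
Variables (R : rcfType) (m n : nat).
Implicit Types (V : 'M[quat R]_(m, n)) (v : 'cV[quat R]_m).

Lemma frame_energy_gram V v :
  \sum_(l < n) qconj (qinner v (col l V)) * qinner v (col l V)
  = \sum_(i < m) \sum_(j < m) qconj (v i 0) * (V *m qadj V) i j * v j 0.
Proof.
transitivity (\sum_(l < n) \sum_(i < m) \sum_(j < m)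
    qconj (v i 0) * (V i l * qconj (V j l)) * v j 0).
  apply: eq_bigr => l _; rewrite /qinner qconj_sum mulr_suml.
  apply: eq_bigr => i _; rewrite mulr_sumr; apply: eq_bigr => j _.
  by rewrite !mxE qconjM qconjK !mulrA.
rewrite exchange_big; apply: eq_bigr => i _; rewrite exchange_big.
apply: eq_bigr => j _; rewrite -mulr_suml -mulr_sumr mxE.
by congr (_ * _ * _); apply: eq_bigr => l _; rewrite mxE.
Qed.

Lemma frame_energy_orthogonal_rows V (r : R) v :
  V *m qadj V = (qreal r)%:M ->
  \sum_(l < n) qnorm (qinner v (col l V)) ^+ 2 = r * qvnorm v ^+ 2.
Proof.
move=> VVadj; rewrite /qvnorm sqr_sqrtr; last first.
  by apply: sumr_ge0 => i _; exact: qnorm2_ge0.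
under eq_bigr do rewrite qnorm_sq qnorm2_q0.
rewrite -q0_sum frame_energy_gram VVadj q0_sum mulr_sumr.
apply: eq_bigr => i _; rewrite -q0_conj_real_mul; congr q0.
rewrite (bigD1 i) //= big1 => [|j ji].
  by rewrite addr0 mxE eqxx mulr1n.
by rewrite mxE eq_sym (negbTE ji) mulr0n mulr0 mul0r.
Qed.

Lemma tight_frame_orthogonal_rows V (r : R) :
  0 < r -> V *m qadj V = (qreal r)%:M -> tight_frame V r.
Proof.
move=> r_gt0 VVadj; split; first exact: r_gt0; split; first exact: r_gt0.
by move=> v; rewrite (frame_energy_orthogonal_rows _ VVadj) lexx.
Qed.

End FrameEnergy.

Lemma rowsub_orthogonal_rows (R : rcfType) m n (f : 'I_m -> 'I_n)
    (M : 'M[quat R]_n) (r : R) :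
  injective f -> M *m qadj M = (qreal r)%:M ->
  rowsub f M *m qadj (rowsub f M) = (qreal r)%:M.
Proof.
move=> finj /matrixP MMadj; apply/matrixP => i j.
have := MMadj (f i) (f j); rewrite !mxE (inj_eq finj) => <-.
by apply: eq_bigr => k _; rewrite !mxE.
Qed.

Lemma qod_sigma_unimodular (R : rcfType) u n (s : 'I_u -> nat) (x : 'I_u -> R[i]) :
  (\sum_(l < u) s l)%N = n -> (forall l, `|x l| = 1) -> qod_sigma s x = n%:R.
Proof.
move=> <- x_unit; rewrite /qod_sigma natr_sum; apply: eq_bigr => l _.
by rewrite cnorm2_unimodular // mulr1.
Qed.

Lemma cmonomial_unimodular (R : rcfType) u (x : 'I_u -> R[i]) (a b : 'I_u -> nat) :
  (forall l, `|x l| = 1) -> `|cmonomial x a b| = 1.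
Proof.
move=> x_unit; rewrite /cmonomial normrM !normr_prod !big1 ?mulr1 // => l _;
  by rewrite normrX ?normcJ x_unit expr1n.
Qed.

Lemma qnorm_coefficient (R : rcfType) (alpha beta c : quat R) :
  qnorm alpha = qnorm beta ->
  c \in [:: alpha; qconj alpha; beta; qconj beta] -> qnorm c = qnorm alpha.
Proof.
move=> hab; rewrite !inE => /or4P [] /eqP ->; by rewrite ?qnorm_conj ?hab.
Qed.

Theorem mainTheorem1 (R : rcfType) (u n m : nat) (s : 'I_u -> nat)
    (X : 'M[qod_entry u]_n) (f : 'I_m -> 'I_n) (alpha beta : quat R) :
  (0 < n)%N ->
  is_full_QOD R s X ->
  injective f ->
  qnorm alpha = qnorm beta ->
  (let X1 x := rowsub f (eval_design x X) in
   let cs := [:: alpha; qconj alpha; beta; qconj beta] in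
   (* (a) *)
   (forall i j : 'I_n, i != j ->
      exists (sg : bool) (eps : qunit) (c : quat R) (a b : 'I_u -> nat),
        c \in cs /\
        forall x : 'I_u -> R[i],
          (qadj (X1 x) *m X1 x) i j
          = (-1) ^+ sg * qunit_val R eps * c * qcplx (cmonomial x a b))
   \/
   (* (b) *)
   (forall i j : 'I_n, i != j ->
      exists (sg : bool) (eps : qunit) (c : quat R),
        c \in cs /\
        forall x : 'I_u -> R[i],
          (qadj (X1 x) *m X1 x) i j
          = (-1) ^+ sg * qunit_val R eps * c * qreal (qod_sigma s x))) ->
  forall x : 'I_u -> R[i], (forall l, `|x l| = 1) ->
    equiangular_tight_frame (rowsub f (eval_design x X)) n%:R.
Proof.
move=> n_gt0 [XXadj full] finj hab /= gram x x_unit.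
have sigma_n := qod_sigma_unimodular full x_unit.
split.
  apply: tight_frame_orthogonal_rows; first by rewrite ltr0n.
  by apply: rowsub_orthogonal_rows finj _; rewrite -sigma_n; exact: XXadj.
case: gram => gram.
- exists (qnorm alpha) => i j ij.
  have [sg [eps [c [a [b [c_in ->]]]]]] := gram i j ij.
  rewrite qnorm_signed_unit_mul (qnorm_coefficient hab c_in).
  by rewrite qnorm_cplx_unimodular ?mulr1 // cmonomial_unimodular.
- exists (qnorm alpha * n%:R) => i j ij.
  have [sg [eps [c [c_in ->]]]] := gram i j ij.
  rewrite qnorm_signed_unit_mul (qnorm_coefficient hab c_in).
  by rewrite sigma_n qnorm_real ?ler0n.
Qed.
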